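(* (GBC) The class $V$ of all sets, viewed as the ideal of all subsets of $V$ (i.e. the collection of those subclasses of $V$ that are sets), is a minimal access ideal for $V$.
   Context: GBC is Gödel–Bernays class theory with choice. An ideal on a class (or set) $X$ is a (definable) collection $\mathcal I$ of subclasses of $X$ such that (i) $Y_1,Y_2\in\mathcal I\Rightarrow Y_1\cup Y_2\in\mathcal I$, (ii) $Y\in\mathcal I$, $Z\subseteq Y\Rightarrow Z\in\mathcal I$, (iii) $X\notin\mathcal I$. A preordering of $X$ is a reflexive, transitive, total binary relation $\preccurlyeq$ on $X$; throughout, all preorderings are assumed to have no last element. For $x\in X$ let ${\preccurlyeq_x}=\{y\in X:y\preccurlyeq x\}$. A subclass $Y\subseteq X$ is $\preccurlyeq$-bounded if $Y\subseteq{\preccurlyeq_x}$ for some $x\in X$; otherwise it is cofinal. $Seg(\preccurlyeq)$ denotes the ideal of $\preccurlyeq$-bounded subclasses of $X$. An ideal $\mathcal I$ on $X$ is an access ideal for $X$ ($X$ is $\mathcal I$-accessible) if there is a preordering $\preccurlyeq$ of $X$ with $Seg(\preccurlyeq)\subseteq\mathcal I$; such $\preccurlyeq$ is called an $\mathcal I$-preordering. $\mathcal I$ is a minimal access ideal for $X$ if it is an access ideal for $X$ and for no ideal $\mathcal J\subsetneq\mathcal I$ is $X$ $\mathcal J$-accessible. *)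

(* A two-sorted model of GBC (Goedel-Bernays class theory with
   global choice), with predicative class comprehension stated as a scheme over
   a deep embedding of first-order formulas. *)

(* Formulas of the language of class theory.  Set variables and class
   variables are de Bruijn indices into two separate environments. *)
Inductive fml : Type :=
| FIn  : nat -> nat -> fml
| FEq  : nat -> nat -> fml
| FInC : nat -> nat -> fml
| FNot : fml -> fml
| FAnd : fml -> fml -> fml
| FOr  : fml -> fml -> fml
| FImp : fml -> fml -> fml
| FAll : fml -> fml
| FEx  : fml -> fml
| FAllC : fml -> fml
| FExC  : fml -> fml.

Fixpoint predicative (p : fml) : Prop :=
  match p with
  | FIn _ _ | FEq _ _ | FInC _ _ => True
  | FNot q | FAll q | FEx q => predicative q
  | FAnd q r | FOr q r | FImp q r => predicative q /\ predicative r
  | FAllC _ | FExC _ => False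
  end.

Definition scons {T : Type} (x : T) (e : nat -> T) : nat -> T :=
  fun n => match n with 0 => x | Datatypes.S m => e m end.

Section Semantics.
Variables (Tset Tcls : Type) (elem : Tset -> Tset -> Prop)
          (cmem : Tset -> Tcls -> Prop).

Fixpoint sat (e : nat -> Tset) (ce : nat -> Tcls) (p : fml) : Prop :=
  match p with
  | FIn i j => elem (e i) (e j)
  | FEq i j => e i = e j
  | FInC i k => cmem (e i) (ce k)
  | FNot q => ~ sat e ce q
  | FAnd q r => sat e ce q /\ sat e ce r
  | FOr q r => sat e ce q \/ sat e ce r
  | FImp q r => sat e ce q -> sat e ce r
  | FAll q => forall x, sat (scons x e) ce q
  | FEx q => exists x, sat (scons x e) ce q
  | FAllC q => forall A, sat e (scons A ce) q
  | FExC q => exists A, sat e (scons A ce) q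
  end.

(* p is the Kuratowski ordered pair (x, y) = {{x}, {x, y}} *)
Definition is_pair (x y p : Tset) : Prop :=
  forall z, elem z p <->
    ((forall w, elem w z <-> w = x) \/ (forall w, elem w z <-> w = x \/ w = y)).

Definition functional (F : Tcls) : Prop :=
  forall x y1 y2 p1 p2, is_pair x y1 p1 -> cmem p1 F ->
    is_pair x y2 p2 -> cmem p2 F -> y1 = y2.

End Semantics.

Record GBC_model : Type := {
  gset : Type;
  gcls : Type;
  elem : gset -> gset -> Prop;
  cmem : gset -> gcls -> Prop;
  ax_ext_set : forall x y, (forall z, elem z x <-> elem z y) -> x = y;
  ax_ext_cls : forall A B, (forall z, cmem z A <-> cmem z B) -> A = B;
  ax_pair : forall x y, exists p, forall z, elem z p <-> z = x \/ z = y;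
  ax_union : forall x, exists u, forall z,
      elem z u <-> exists y, elem y x /\ elem z y;
  ax_power : forall x, exists p, forall z,
      elem z p <-> (forall w, elem w z -> elem w x);
  ax_infinity : exists i,
      (exists e, elem e i /\ forall w, ~ elem w e) /\
      (forall y, elem y i -> exists s, elem s i /\
          forall z, elem z s <-> elem z y \/ z = y);
  ax_foundation : forall x, (exists y, elem y x) ->
      exists y, elem y x /\ ~ (exists z, elem z y /\ elem z x);
  ax_replacement : forall F, functional gset gcls elem cmem F ->
      forall a, exists b, forall y, elem y b <->
        exists x p, elem x a /\ is_pair gset elem x y p /\ cmem p F;
  ax_comprehension : forall (phi : fml), predicative phi ->
      forall (e : nat -> gset) (ce : nat -> gcls),
      exists A, forall x, cmem x A <-> sat gset gcls elem cmem (scons x e) ce phi;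
  ax_global_choice : exists G, functional gset gcls elem cmem G /\
      forall x, (exists y, elem y x) ->
        exists y p, elem y x /\ is_pair gset elem x y p /\ cmem p G
}.

Arguments elem {g}.
Arguments cmem {g}.

Section Ideals.
Variable M : GBC_model.

Definition subclass (A B : gcls M) : Prop := forall z, cmem z A -> cmem z B.

Definition definable_coll (P : gcls M -> Prop) : Prop :=
  exists (psi : fml) (e : nat -> gset M) (ce : nat -> gcls M),
    forall A, P A <-> sat (gset M) (gcls M) (@elem M) (@cmem M) e (scons A ce) psi.

Definition is_ideal (X : gcls M) (I : gcls M -> Prop) : Prop :=
  definable_coll I /\
  (forall Y, I Y -> subclass Y X) /\
  (forall Y1 Y2 Y, I Y1 -> I Y2 ->
     (forall z, cmem z Y <-> cmem z Y1 \/ cmem z Y2) -> I Y) /\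
  (forall Y Z, I Y -> subclass Z Y -> I Z) /\
  ~ I X.

Definition rle (R : gcls M) (y x : gset M) : Prop :=
  exists p, is_pair (gset M) (@elem M) y x p /\ cmem p R.

Definition preordering (X R : gcls M) : Prop :=
  (forall p, cmem p R -> exists y x, is_pair (gset M) (@elem M) y x p /\ cmem y X /\ cmem x X) /\
  (forall x, cmem x X -> rle R x x) /\
  (forall x y z, cmem x X -> cmem y X -> cmem z X -> rle R x y -> rle R y z -> rle R x z) /\
  (forall x y, cmem x X -> cmem y X -> rle R x y \/ rle R y x) /\
  (forall x, cmem x X -> exists y, cmem y X /\ ~ rle R y x).

Definition bounded (X R Y : gcls M) : Prop :=
  exists x, cmem x X /\ forall y, cmem y Y -> cmem y X /\ rle R y x.

Definition seg_sub (X R : gcls M) (I : gcls M -> Prop) : Prop :=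
  forall Y, subclass Y X -> bounded X R Y -> I Y.

Definition accessible (X : gcls M) (I : gcls M -> Prop) : Prop :=
  exists R, preordering X R /\ seg_sub X R I.

Definition access_ideal (X : gcls M) (I : gcls M -> Prop) : Prop :=
  is_ideal X I /\ accessible X I.

Definition minimal_access_ideal (X : gcls M) (I : gcls M -> Prop) : Prop :=
  access_ideal X I /\
  forall J, is_ideal X J -> (forall A, J A -> I A) -> (exists A, I A /\ ~ J A) ->
    ~ accessible X J.

Definition set_classes (A : gcls M) : Prop :=
  exists a, forall z, cmem z A <-> elem z a.

End Ideals.

From Stdlib Require Import Classical.

(* Accessibility: the rank preordering  x ≼ y  ("x lies in every level V_α
   that contains y") has set-sized initial segments, so every ≼-bounded class
   is a set.  Minimality: if J is an access ideal strictly below the ideal of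
   sets, witnessed by ≼, then every initial segment ≼_x is bounded, hence in J,
   hence a set; a set a outside J must be ≼-cofinal (bounded classes are in J),
   so by Replacement the union of the segments ≼_x for x ∈ a is a set
   containing every set, which Foundation forbids.

   Without ordinals, the levels V_α are introduced as members of "towers": sets
   T of sets each of which is the union of the power sets of its members lying
   in T. *)

Section Development.
Variable M : GBC_model.
Local Notation St := (gset M).
Local Notation Cl := (gcls M).
Local Notation "x ∈ y" := (@elem M x y) (at level 70).
Local Notation "x ∈c A" := (@cmem M x A) (at level 70).
Local Notation sat := (sat St Cl (@elem M) (@cmem M)).
Local Notation ispair := (is_pair St (@elem M)).

(* Encodings of the formulas used in comprehension.  In each, the indices
   name the set variables concerned, relative to the binder of the formula. *)
Definition fIff (a b : fml) : fml := FAnd (FImp a b) (FImp b a).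

(* k is the Kuratowski pair (i, j) *)
Definition fPair (i j k : nat) : fml :=
  FAll (fIff (FIn 0 (S k)) (FOr (FAll (fIff (FIn 0 1) (FEq 0 (S (S i)))))
                                (FAll (fIff (FIn 0 1) (FOr (FEq 0 (S (S i))) (FEq 0 (S (S j)))))))).

Definition definable (P : St -> Prop) : Prop := exists phi e ce, predicative phi /\
  forall x, P x <-> sat (scons x e) ce phi.

Lemma class_inhabited : inhabited Cl.
Proof. destruct (ax_global_choice M) as [G _]. exact (inhabits G). Qed.

Lemma set_inhabited : inhabited St.
Proof. destruct (ax_infinity M) as [i _]. exact (inhabits i). Qed.

(* Definability goals are closed by exhibiting the formula and parameters;
   the property must be the literal meaning of the formula.  Formulas without
   class (resp. set) parameters may use arbitrary parameter environments. *)
Ltac definable_by phi e ce :=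
  exists phi, e, ce; split; [simpl; tauto | intro; reflexivity].
Ltac set_definable_by phi e :=
  let G := fresh "G" in destruct class_inhabited as [G]; definable_by phi e (fun _ : nat => G).
Ltac closed_definable_by phi :=
  let d := fresh "d" in destruct set_inhabited as [d]; set_definable_by phi (fun _ : nat => d).

Lemma class_of (P : St -> Prop) : definable P -> exists A, forall x, x ∈c A <-> P x.
Proof.
  intros [phi [e [ce [Hp HP]]]].
  destruct (ax_comprehension M phi Hp e ce) as [A HA].
  exists A. intro x. rewrite HA, HP. reflexivity.
Qed.

Lemma singleton (x : St) : exists s, forall z, z ∈ s <-> z = x.
Proof. destruct (ax_pair M x x) as [s Hs]. exists s. intro z. rewrite Hs. tauto. Qed.

Lemma union2 (a b : St) : exists u, forall z, z ∈ u <-> z ∈ a \/ z ∈ b.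
Proof.
  destruct (ax_pair M a b) as [p Hp]. destruct (ax_union M p) as [u Hu].
  exists u. intro z. rewrite Hu. split.
  - intros [y [Hy Hz]]. apply Hp in Hy. destruct Hy; subst; tauto.
  - intros [H|H]; [exists a | exists b]; split; try assumption; apply Hp; tauto.
Qed.

Lemma pair_exists (x y : St) : exists p, ispair x y p.
Proof.
  destruct (singleton x) as [s Hs]; destruct (ax_pair M x y) as [t Ht];
  destruct (ax_pair M s t) as [p Hp].
  exists p. intro z. rewrite Hp. split.
  - intros [H|H]; subst z; [left; exact Hs | right; exact Ht].
  - intros [H|H]; [left|right]; apply (ax_ext_set M); intro w; rewrite H;
      [rewrite Hs | rewrite Ht]; tauto.
Qed.

Lemma pair_mem x y p : ispair x y p -> forall q, q ∈ p -> forall w, w ∈ q -> w = x \/ w = y.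
Proof. intros H q Hq w Hw. apply H in Hq. destruct Hq as [Hq|Hq]; apply Hq in Hw; tauto. Qed.

Lemma pair_injective x y x' y' p : ispair x y p -> ispair x' y' p -> x = x' /\ y = y'.
Proof.
  intros H H'.
  assert (Hx : x = x').
  { destruct (singleton x) as [s Hs].
    assert (Hsp : s ∈ p) by (apply H; left; exact Hs).
    destruct (pair_mem _ _ _ H' s Hsp x) as [E|E]; [apply Hs; reflexivity| exact E |].
    apply H' in Hsp. destruct Hsp as [Hq|Hq].
    - symmetry; apply Hs; apply Hq; reflexivity.
    - symmetry; apply Hs; apply Hq; left; reflexivity. }
  subst x'. split; [reflexivity|].
  destruct (ax_pair M x y) as [q Hq]. destruct (ax_pair M x y') as [q' Hq'].
  assert (Hqp : q ∈ p) by (apply H; right; exact Hq).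
  assert (Hqp' : q' ∈ p) by (apply H'; right; exact Hq').
  assert (A : y = x \/ y = y') by (apply (pair_mem _ _ _ H' q Hqp); apply Hq; right; reflexivity).
  assert (B : y' = x \/ y' = y) by (apply (pair_mem _ _ _ H q' Hqp'); apply Hq'; right; reflexivity).
  destruct A, B; congruence.
Qed.

Lemma image_set (F : St -> St -> Prop) :
  definable (fun p => exists x s, ispair x s p /\ F x s) ->
  (forall x s s', F x s -> F x s' -> s = s') ->
  forall a, exists b, forall s, s ∈ b <-> exists x, x ∈ a /\ F x s.
Proof.
  intros HF Hfun a.
  destruct (class_of _ HF) as [G HG].
  assert (Hg : functional St Cl (@elem M) (@cmem M) G).
  { intros x s1 s2 p1 p2 H1 H1G H2 H2G.
    apply HG in H1G; apply HG in H2G.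
    destruct H1G as [x1 [t1 [E1 F1]]]; destruct H2G as [x2 [t2 [E2 F2]]].
    destruct (pair_injective _ _ _ _ _ H1 E1) as [<- <-].
    destruct (pair_injective _ _ _ _ _ H2 E2) as [<- <-].
    exact (Hfun _ _ _ F1 F2). }
  destruct (ax_replacement M G Hg a) as [b Hb].
  exists b. intro s. rewrite Hb. split.
  - intros [x [p [Hx [Hp HpG]]]]. apply HG in HpG. destruct HpG as [x1 [s1 [E Hxs]]].
    destruct (pair_injective _ _ _ _ _ Hp E) as [<- <-]. exists x. split; assumption.
  - intros [x [Hx Hxs]]. destruct (pair_exists x s) as [p Hp].
    exists x, p. split; [exact Hx|]. split; [exact Hp|]. apply HG. exists x, s. tauto.
Qed.

Lemma union_of_image (F : St -> St -> Prop) :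
  definable (fun p => exists x s, ispair x s p /\ F x s) ->
  (forall x s s', F x s -> F x s' -> s = s') ->
  forall a, exists u, forall z, z ∈ u <-> exists x s, x ∈ a /\ F x s /\ z ∈ s.
Proof.
  intros HF Hfun a. destruct (image_set F HF Hfun a) as [b Hb].
  destruct (ax_union M b) as [u Hu].
  exists u. intro z. rewrite Hu. split.
  - intros [s [Hs Hz]]. apply Hb in Hs. destruct Hs as [x [Hx Hxs]]. exists x, s. tauto.
  - intros [x [s [Hx [Hxs Hz]]]]. exists s. split; [apply Hb; exists x; tauto | exact Hz].
Qed.

(* Separation by a class, obtained from Replacement with the identity on A. *)
Lemma separation_class (A : Cl) (a : St) : exists b, forall z, z ∈ b <-> z ∈ a /\ z ∈c A.
Proof.
  assert (HF : definable (fun p => exists x s, ispair x s p /\ (x ∈c A /\ s = x))).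
  { destruct set_inhabited as [d].
    definable_by (FEx (FEx (FAnd (fPair 1 0 2) (FAnd (FInC 1 0) (FEq 0 1)))))
      (fun _ : nat => d) (fun _ : nat => A). }
  assert (Hfun : forall x s s', x ∈c A /\ s = x -> x ∈c A /\ s' = x -> s = s').
  { intros x s s' [_ ->] [_ ->]. reflexivity. }
  destruct (image_set _ HF Hfun a) as [b Hb].
  exists b. intro z. rewrite Hb. split.
  - intros [x [Hx [HxA ->]]]. tauto.
  - intros [Hz HzA]. exists z. tauto.
Qed.

Lemma separation (P : St -> Prop) (a : St) : definable P -> exists b, forall z, z ∈ b <-> z ∈ a /\ P z.
Proof.
  intro HP. destruct (class_of P HP) as [A HA]. destruct (separation_class A a) as [b Hb].
  exists b. intro z. rewrite Hb, HA. reflexivity.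
Qed.

Lemma no_two_cycle (a b : St) : a ∈ b -> b ∈ a -> False.
Proof.
  intros H1 H2. destruct (ax_pair M a b) as [p Hp].
  destruct (ax_foundation M p) as [y [Hy1 Hy2]].
  { exists a; apply Hp; left; reflexivity. }
  apply Hp in Hy1. destruct Hy1 as [E|E]; subst y; apply Hy2.
  - exists b. split; [exact H2| apply Hp; right; reflexivity].
  - exists a. split; [exact H1| apply Hp; left; reflexivity].
Qed.

Lemma not_in_self (a : St) : ~ a ∈ a.
Proof. intro H. exact (no_two_cycle a a H H). Qed.

Definition is_empty (x : St) := forall w, ~ w ∈ x.
Definition is_succ (u v : St) := forall z, z ∈ v <-> z ∈ u \/ z = u.
Definition is_inductive (s : St) := (exists e, e ∈ s /\ is_empty e) /\
  forall u, u ∈ s -> exists v, v ∈ s /\ is_succ u v.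
Definition is_nat (n : St) := forall s, is_inductive s -> n ∈ s.
Definition is_cum (s t : St) := forall z, z ∈ t <-> z ∈ s \/ exists w, w ∈ s /\ z ∈ w.

Definition fEmpty i := FAll (FNot (FIn 0 (S i))).
Definition fSucc i j := FAll (fIff (FIn 0 (S j)) (FOr (FIn 0 (S i)) (FEq 0 (S i)))).
Definition fInd i := FAnd (FEx (FAnd (FIn 0 (S i)) (fEmpty 0)))
   (FAll (FImp (FIn 0 (S i)) (FEx (FAnd (FIn 0 (S (S i))) (fSucc 1 0))))).
Definition fNat i := FAll (FImp (fInd 0) (FIn (S i) 0)).
Definition fCum i j :=
  FAll (fIff (FIn 0 (S j)) (FOr (FIn 0 (S i)) (FEx (FAnd (FIn 0 (S (S i))) (FIn 1 0))))).

Lemma nat_empty e : is_empty e -> is_nat e.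
Proof.
  intros He s [[e' [He' He'e]] _]. replace e with e'; [exact He'|].
  apply (ax_ext_set M); intro z; split; intro Hz; [destruct (He'e z Hz) | destruct (He z Hz)].
Qed.

Lemma succ_unique u v v' : is_succ u v -> is_succ u v' -> v = v'.
Proof. intros H H'. apply (ax_ext_set M); intro z; specialize (H z); specialize (H' z); tauto. Qed.

Lemma nat_succ n v : is_nat n -> is_succ n v -> is_nat v.
Proof.
  intros Hn Hv s Hs. pose proof (Hn s Hs) as Hns. destruct Hs as [_ Hs].
  destruct (Hs n Hns) as [v' [Hv' Hsv']]. rewrite (succ_unique _ _ _ Hv Hsv'). exact Hv'.
Qed.

Lemma succ_injective a b v : is_succ a v -> is_succ b v -> a = b.
Proof.
  intros Ha Hb.
  assert (A : a ∈ v) by (apply Ha; right; reflexivity).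
  assert (B : b ∈ v) by (apply Hb; right; reflexivity).
  apply Hb in A. apply Ha in B.
  destruct A as [A|A]; [|exact A]. destruct B as [B|B]; [|symmetry; exact B].
  destruct (no_two_cycle _ _ A B).
Qed.

Lemma succ_exists u : exists v, is_succ u v.
Proof.
  destruct (singleton u) as [s Hs]. destruct (union2 u s) as [v Hv].
  exists v. intro z. rewrite Hv, Hs. reflexivity.
Qed.

Lemma cum_exists s : exists t, is_cum s t.
Proof.
  destruct (ax_union M s) as [U HU]. destruct (union2 s U) as [t Ht].
  exists t. intro z. rewrite Ht, HU. reflexivity.
Qed.

(* Induction over the natural numbers for definable properties, by separating
   the good natural numbers from the inductive set given by Infinity. *)
Lemma nat_induction P : definable P -> (forall e, is_empty e -> P e) ->
  (forall n v, is_nat n -> P n -> is_succ n v -> P v) -> forall n, is_nat n -> P n.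
Proof.
  intros HP H0 HS.
  destruct (ax_infinity M) as [i Hi]. change (is_inductive i) in Hi.
  destruct (separation (fun x => is_nat x /\ P x) i) as [s Hs].
  { destruct HP as [phi [e [ce [Hp HP]]]].
    exists (FAnd (fNat 0) phi), e, ce. split; [simpl; tauto|].
    intro x. rewrite HP. reflexivity. }
  assert (HI : is_inductive s).
  { split.
    - destruct Hi as [[e [He1 He2]] _]. exists e. split; [|exact He2]. apply Hs.
      split; [exact He1|]. split; [apply nat_empty; exact He2 | apply H0; exact He2].
    - intros u Hu. apply Hs in Hu. destruct Hu as [Hui [Hun Hup]].
      destruct Hi as [_ Hi2]. destruct (Hi2 u Hui) as [v [Hv1 Hv2]]. exists v. split; [|exact Hv2].
      apply Hs. split; [exact Hv1|]. split; [apply (nat_succ u v Hun Hv2) | apply (HS u v Hun Hup Hv2)]. }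
  intros n Hn. specialize (Hn s HI). apply Hs in Hn. tauto.
Qed.

(* The iteration  s_0 = y,  s_(k+1) = s_k ∪ ⋃ s_k.  An attempt is a set of pairs
   (k, s) each justified by the recursion; iterate y k s says s = s_k. *)
Definition attempt (y g : St) := forall k s p, ispair k s p -> p ∈ g ->
   (is_empty k /\ s = y) \/
   exists k' s' p', ispair k' s' p' /\ p' ∈ g /\ is_succ k' k /\ is_cum s' s.
Definition iterate (y k s : St) := exists g p, attempt y g /\ ispair k s p /\ p ∈ g.

Definition fAttempt y g := FAll (FAll (FAll (FImp (fPair 2 1 0) (FImp (FIn 0 (3+g))
  (FOr (FAnd (fEmpty 2) (FEq 1 (3+y)))
       (FEx (FEx (FEx (FAnd (fPair 2 1 0) (FAnd (FIn 0 (6+g)) (FAnd (fSucc 2 5) (fCum 1 4)))))))))))).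
Definition fIterate y k s :=
  FEx (FEx (FAnd (fAttempt (2+y) 1) (FAnd (fPair (2+k) (2+s) 0) (FIn 0 1)))).

Lemma iterate_zero y e : is_empty e -> iterate y e y.
Proof.
  intro He. destruct (pair_exists e y) as [p Hp]. destruct (singleton p) as [g Hg].
  exists g, p. split; [|split; [exact Hp| apply Hg; reflexivity]].
  intros k s p' Hp' Hg'. apply Hg in Hg'. subst p'.
  destruct (pair_injective _ _ _ _ _ Hp Hp') as [<- <-]. left; split; [exact He | reflexivity].
Qed.

Lemma iterate_succ y k s v t : iterate y k s -> is_succ k v -> is_cum s t -> iterate y v t.
Proof.
  intros [g [p [Hg [Hp Hpg]]]] Hv Ht.
  destruct (pair_exists v t) as [p0 Hp0]. destruct (singleton p0) as [sg Hsg].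
  destruct (union2 g sg) as [g' Hg'].
  exists g', p0. split; [|split; [exact Hp0| apply Hg'; right; apply Hsg; reflexivity]].
  intros k1 s1 p1 Hp1 Hp1g. apply Hg' in Hp1g. destruct Hp1g as [Hp1g|Hp1g].
  - destruct (Hg k1 s1 p1 Hp1 Hp1g) as [L|[k' [s' [p' [A [B [C D]]]]]]]; [left; exact L|].
    right. exists k', s', p'. split; [exact A|]. split; [apply Hg'; left; exact B|]. split; assumption.
  - apply Hsg in Hp1g. subst p1. destruct (pair_injective _ _ _ _ _ Hp0 Hp1) as [<- <-].
    right. exists k, s, p. split; [exact Hp|]. split; [apply Hg'; left; exact Hpg|]. split; assumption.
Qed.

Lemma iterate_zero_inv y e s : iterate y e s -> is_empty e -> s = y.
Proof.
  intros [g [p [Hg [Hp Hpg]]]] He.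
  destruct (Hg e s p Hp Hpg) as [[_ E]|[k' [s' [p' [_ [_ [C _]]]]]]]; [exact E|].
  exfalso. apply (He k'). apply C. right; reflexivity.
Qed.

Lemma iterate_succ_inv y n v s : iterate y v s -> is_succ n v ->
  exists s', iterate y n s' /\ is_cum s' s.
Proof.
  intros [g [p [Hg [Hp Hpg]]]] Hv.
  destruct (Hg v s p Hp Hpg) as [[E _]|[k' [s' [p' [A [B [C D]]]]]]].
  - exfalso. apply (E n). apply Hv. right; reflexivity.
  - rewrite (succ_injective _ _ _ C Hv) in A. exists s'. split; [|exact D]. exists g, p'. tauto.
Qed.

Lemma iterate_unique y : forall k, is_nat k -> forall s s', iterate y k s -> iterate y k s' -> s = s'.
Proof.
  apply (nat_induction (fun k => forall s s', iterate y k s -> iterate y k s' -> s = s')).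
  - set_definable_by (FAll (FAll (FImp (fIterate 3 2 1) (FImp (fIterate 3 2 0) (FEq 1 0)))))
      (fun _ : nat => y).
  - intros e He s s' H H'. rewrite (iterate_zero_inv _ _ _ H He), (iterate_zero_inv _ _ _ H' He).
    reflexivity.
  - intros n v Hn IH Hv s s' H H'.
    destruct (iterate_succ_inv _ _ _ _ H Hv) as [a [Ha Ca]].
    destruct (iterate_succ_inv _ _ _ _ H' Hv) as [b [Hb Cb]].
    rewrite (IH a b Ha Hb) in Ca. apply (ax_ext_set M). intro z.
    specialize (Ca z); specialize (Cb z); tauto.
Qed.

(* Every set is an element of a transitive set, namely ⋃_k s_k for y = {x}. *)
Lemma transitive_superset (x : St) :
  exists T, x ∈ T /\ forall z, z ∈ T -> forall w, w ∈ z -> w ∈ T.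
Proof.
  destruct (singleton x) as [y Hy].
  destruct (ax_infinity M) as [i Hi]. change (is_inductive i) in Hi.
  assert (HF : definable (fun p => exists k s, ispair k s p /\ (is_nat k /\ iterate y k s))).
  { set_definable_by (FEx (FEx (FAnd (fPair 1 0 2) (FAnd (fNat 1) (fIterate 3 1 0)))))
      (fun _ : nat => y). }
  assert (Hfun : forall k s s', is_nat k /\ iterate y k s -> is_nat k /\ iterate y k s' -> s = s').
  { intros k s s' [Hk Hs] [_ Hs']. exact (iterate_unique y k Hk s s' Hs Hs'). }
  destruct (union_of_image _ HF Hfun i) as [T HT].
  assert (Hin : forall k s z, is_nat k -> iterate y k s -> z ∈ s -> z ∈ T).
  { intros k s z Hk Hs Hz. apply HT. exists k, s. split; [exact (Hk i Hi)|]. tauto. }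
  exists T. split.
  - destruct Hi as [[e [_ He]] _].
    apply (Hin e y x (nat_empty e He) (iterate_zero y e He)). apply Hy. reflexivity.
  - intros z Hz w Hw. apply HT in Hz. destruct Hz as [k [s [_ [[Hk Hs] Hzs]]]].
    destruct (succ_exists k) as [v Hv]. destruct (cum_exists s) as [t Ht].
    apply (Hin v t w (nat_succ _ _ Hk Hv) (iterate_succ _ _ _ _ _ Hs Hv Ht)).
    apply Ht. right. exists z. split; assumption.
Qed.

(* ∈-induction for classes: an ∈-minimal counterexample is found in a
   transitive set containing a counterexample. *)
Lemma class_eps_induction (A : Cl) :
  (forall x, (forall u, u ∈ x -> u ∈c A) -> x ∈c A) -> forall x, x ∈c A.
Proof.
  intros H x. apply NNPP; intro Hx.
  destruct (transitive_superset x) as [T [HxT HT]].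
  destruct (class_of (fun z => ~ z ∈c A)) as [N HN].
  { definable_by (FNot (FInC 0 0)) (fun _ : nat => x) (fun _ : nat => A). }
  destruct (separation_class N T) as [D HD].
  destruct (ax_foundation M D) as [m [Hm1 Hm2]].
  { exists x. apply HD. split; [exact HxT| apply HN; exact Hx]. }
  apply HD in Hm1. destruct Hm1 as [HmT HmN]. apply HN in HmN. apply HmN. apply H. intros u Hu.
  apply NNPP; intro Hu'. apply Hm2. exists u. split; [exact Hu|]. apply HD.
  split; [exact (HT m HmT u Hu)| apply HN; exact Hu'].
Qed.

Lemma eps_induction P : definable P -> (forall x, (forall u, u ∈ x -> P u) -> P x) -> forall x, P x.
Proof.
  intros HP H. destruct (class_of P HP) as [A HA].
  intro x. apply HA. apply class_eps_induction. intros z Hz. apply HA. apply H.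
  intros u Hu. apply HA. apply Hz. exact Hu.
Qed.

Definition subset (x y : St) := forall u, u ∈ x -> u ∈ y.
Definition is_tower (T : St) := forall V, V ∈ T ->
  forall x, x ∈ V <-> exists W, W ∈ T /\ W ∈ V /\ subset x W.
Definition is_level (V : St) := exists T, is_tower T /\ V ∈ T.
Definition comparable (V V' : St) := V ∈ V' \/ V = V' \/ V' ∈ V.

Definition fSubset i j := FAll (FImp (FIn 0 (S i)) (FIn 0 (S j))).
Definition fTower t := FAll (FImp (FIn 0 (S t)) (FAll (fIff (FIn 0 1)
   (FEx (FAnd (FIn 0 (3+t)) (FAnd (FIn 0 2) (fSubset 1 0))))))).
Definition fLevel v := FEx (FAnd (fTower 0) (FIn (S v) 0)).
Definition fComparable i j := FOr (FIn i j) (FOr (FEq i j) (FIn j i)).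

Lemma tower_transitive T : is_tower T -> forall V, V ∈ T -> forall x, x ∈ V -> subset x V.
Proof.
  intro HT. unfold subset.
  apply (eps_induction (fun V => V ∈ T -> forall x, x ∈ V -> forall u, u ∈ x -> u ∈ V)).
  { set_definable_by (FImp (FIn 0 1) (FAll (FImp (FIn 0 1) (FAll (FImp (FIn 0 1) (FIn 0 2))))))
      (fun _ : nat => T). }
  intros V IH HV x Hx u Hu.
  apply (HT V HV) in Hx. destruct Hx as [W [HWT [HWV HxW]]].
  pose proof (HxW u Hu) as HuW.
  apply (HT W HWT) in HuW. destruct HuW as [W1 [HW1T [HW1W HuW1]]].
  apply (HT V HV). exists W. split; [exact HWT|]. split; [exact HWV|].
  intros a Ha. exact (IH W HWV HWT W1 HW1W a (HuW1 a Ha)).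
Qed.

Lemma level_transitive V : is_level V -> forall x, x ∈ V -> subset x V.
Proof. intros [T [HT HV]]. exact (tower_transitive T HT V HV). Qed.

Lemma level_member_below V : is_level V ->
  forall x, x ∈ V -> exists W, is_level W /\ W ∈ V /\ subset x W.
Proof.
  intros [T [HT HVT]] x Hx. apply (HT V HVT) in Hx. destruct Hx as [W [HWT [HWV HxW]]].
  exists W. split; [exists T; split; assumption | split; assumption].
Qed.

(* Levels are linearly ordered by ∈ (double ∈-induction: two levels neither
   of which contains the other have the same members). *)
Lemma levels_comparable : forall V, is_level V -> forall V', is_level V' -> comparable V V'.
Proof.
  apply (eps_induction (fun V => is_level V -> forall V', is_level V' -> comparable V V')).
  { closed_definable_by (FImp (fLevel 0) (FAll (FImp (fLevel 0) (fComparable 1 0)))). }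
  intros V IHo HV.
  apply (eps_induction (fun V' => is_level V' -> comparable V V')).
  { set_definable_by (FImp (fLevel 0) (fComparable 1 0)) (fun _ : nat => V). }
  intros V' IHi HV'.
  destruct (classic (V ∈ V')) as [C1|C1]; [left; exact C1|].
  destruct (classic (V' ∈ V)) as [C2|C2]; [right; right; exact C2|].
  right; left.
  destruct HV as [T [HT HVT]]. destruct HV' as [T' [HT' HVT']].
  apply (ax_ext_set M). intro z. split; intro Hz.
  - apply (HT V HVT) in Hz. destruct Hz as [W [HWT [HWV HzW]]].
    destruct (IHo W HWV (ex_intro _ T (conj HT HWT)) V' (ex_intro _ T' (conj HT' HVT')))
      as [D|[D|D]].
    + apply (HT' V' HVT') in D. destruct D as [W1 [HW1 [HW1V HWW1]]].
      apply (HT' V' HVT'). exists W1. split; [exact HW1|]. split; [exact HW1V|].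
      intros a Ha. exact (HWW1 a (HzW a Ha)).
    + subst W. contradiction.
    + exfalso. apply C2. exact (tower_transitive T HT V HVT W HWV V' D).
  - apply (HT' V' HVT') in Hz. destruct Hz as [W [HWT [HWV HzW]]].
    destruct (IHi W HWV (ex_intro _ T' (conj HT' HWT))) as [D|[D|D]].
    + exfalso. apply C1. exact (tower_transitive T' HT' V' HVT' W HWV V D).
    + subst W. contradiction.
    + apply (HT V HVT) in D. destruct D as [W1 [HW1 [HW1V HWW1]]].
      apply (HT V HVT). exists W1. split; [exact HW1|]. split; [exact HW1V|].
      intros a Ha. exact (HWW1 a (HzW a Ha)).
Qed.

Definition lower_union (S0 A : St) := forall x, x ∈ A <-> exists W, W ∈ S0 /\ subset x W.
Definition down_closed (S0 : St) := (forall W, W ∈ S0 -> is_level W) /\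
  (forall W, W ∈ S0 -> forall W', is_level W' -> W' ∈ W -> W' ∈ S0).

Lemma lower_union_exists S0 : exists A, lower_union S0 A.
Proof.
  destruct (ax_union M S0) as [U HU]. destruct (ax_power M U) as [P HP].
  destruct (separation (fun x => exists W, W ∈ S0 /\ subset x W) P) as [A HA].
  { set_definable_by (FEx (FAnd (FIn 0 2) (fSubset 1 0))) (fun _ : nat => S0). }
  exists A. intro x. rewrite HA. split; [tauto|]. intro H. split; [|exact H].
  apply HP. intros w Hw. destruct H as [W [HW HxW]].
  apply HU. exists W. split; [exact HW| exact (HxW w Hw)].
Qed.

Lemma down_closed_tower S0 : down_closed S0 -> is_tower S0.
Proof.
  intros [HL HD] V HV x. destruct (HL V HV) as [T [HT HVT]]. split.
  - intro Hx. apply (HT V HVT) in Hx. destruct Hx as [W [HWT [HWV HxW]]].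
    exists W. split; [|split; assumption].
    apply (HD V HV W); [exists T; split; assumption| exact HWV].
  - intros [W [HWS [HWV HxW]]]. pose proof (proj1 (HT V HVT W) HWV) as D.
    destruct D as [W1 [HW1 [HW1V HWW1]]].
    apply (HT V HVT). exists W1. split; [exact HW1|]. split; [exact HW1V|].
    intros a Ha. exact (HWW1 a (HxW a Ha)).
Qed.

Lemma lower_union_level S0 A : down_closed S0 -> lower_union S0 A -> is_level A.
Proof.
  intros HDC HA. pose proof (down_closed_tower S0 HDC) as HTS.
  destruct (singleton A) as [sA HsA]. destruct (union2 S0 sA) as [S' HS'].
  exists S'. split; [|apply HS'; right; apply HsA; reflexivity].
  intros V HV x. apply HS' in HV. destruct HV as [HV|HV].
  - rewrite (HTS V HV x). split.
    + intros [W [HW R]]. exists W. split; [apply HS'; left; exact HW| exact R].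
    + intros [W [HW [HWV HxW]]]. apply HS' in HW. destruct HW as [HW|HW].
      * exists W. tauto.
      * apply HsA in HW. subst W. exfalso. apply (no_two_cycle A V HWV). apply HA.
        exists V. split; [exact HV| intros a Ha; exact Ha].
  - apply HsA in HV. subst V. rewrite (HA x). split.
    + intros [W [HW HxW]]. exists W. split; [apply HS'; left; exact HW|]. split; [|exact HxW].
      apply HA. exists W. split; [exact HW| intros a Ha; exact Ha].
    + intros [W [HW [HWA HxW]]]. apply HS' in HW. destruct HW as [HW|HW].
      * exists W. tauto.
      * apply HsA in HW. subst W. destruct (not_in_self A HWA).
Qed.

Lemma power_level V : is_level V -> exists V', is_level V' /\ forall x, subset x V -> x ∈ V'.
Proof.
  intro HV.
  destruct (separation is_level V) as [L HL].
  { set_definable_by (fLevel 0) (fun _ : nat => V). }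
  destruct (singleton V) as [sV HsV]. destruct (union2 L sV) as [S0 HS0].
  assert (HS0dc : down_closed S0).
  { split.
    - intros W HW. apply HS0 in HW. destruct HW as [HW|HW].
      + apply HL in HW. tauto.
      + apply HsV in HW. subst W. exact HV.
    - intros W HW W' HW' HW'W. apply HS0. left. apply HL. split; [|exact HW'].
      apply HS0 in HW. destruct HW as [HW|HW].
      + apply HL in HW. exact (level_transitive V HV W (proj1 HW) W' HW'W).
      + apply HsV in HW. subst W. exact HW'W. }
  destruct (lower_union_exists S0) as [A HA].
  exists A. split; [exact (lower_union_level S0 A HS0dc HA)|].
  intros x Hx. apply HA. exists V. split; [apply HS0; right; apply HsV; reflexivity | exact Hx].
Qed.

Definition meet_of_levels (a s : St) := forall z, z ∈ s <-> forall V, is_level V -> a ∈ V -> z ∈ V.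
Definition fMeetOfLevels a s :=
  FAll (fIff (FIn 0 (S s)) (FAll (FImp (fLevel 0) (FImp (FIn (2+a) 0) (FIn 1 0))))).

Lemma meet_of_levels_exists a V0 : is_level V0 -> a ∈ V0 -> exists s, meet_of_levels a s.
Proof.
  intros HV0 Ha.
  destruct (separation (fun z => forall V, is_level V -> a ∈ V -> z ∈ V) V0) as [s Hs].
  { set_definable_by (FAll (FImp (fLevel 0) (FImp (FIn 2 0) (FIn 1 0)))) (fun _ : nat => a). }
  exists s. intro z. rewrite Hs. split; [tauto|]. intro Hz. split; [exact (Hz V0 HV0 Ha) | exact Hz].
Qed.

(* If each member of y lies in a level, the levels missing some member of y
   form a set: each of them belongs to the meet of levels of such a member. *)
Lemma levels_missing_set y : (forall y', y' ∈ y -> exists V, is_level V /\ y' ∈ V) ->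
  exists S0, forall W, W ∈ S0 <-> is_level W /\ exists y', y' ∈ y /\ ~ y' ∈ W.
Proof.
  intro IH.
  assert (HF : definable (fun p => exists a s, ispair a s p /\ meet_of_levels a s)).
  { set_definable_by (FEx (FEx (FAnd (fPair 1 0 2) (fMeetOfLevels 1 0)))) (fun _ : nat => y). }
  assert (Hfun : forall a s s', meet_of_levels a s -> meet_of_levels a s' -> s = s').
  { intros a s s' H H'. apply (ax_ext_set M). intro z. rewrite (H z), (H' z). reflexivity. }
  destruct (union_of_image _ HF Hfun y) as [U HU].
  destruct (separation (fun W => is_level W /\ exists y', y' ∈ y /\ ~ y' ∈ W) U) as [S0 HS0].
  { set_definable_by (FAnd (fLevel 0) (FEx (FAnd (FIn 0 2) (FNot (FIn 0 1))))) (fun _ : nat => y). }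
  exists S0. intro W. rewrite HS0. split; [tauto|]. intro HW. split; [|exact HW].
  destruct HW as [HWl [y' [Hy' Hn]]].
  destruct (IH y' Hy') as [V0 [HV0 Hy'V0]].
  destruct (meet_of_levels_exists y' V0 HV0 Hy'V0) as [s Hs].
  apply HU. exists y', s. split; [exact Hy'|]. split; [exact Hs|].
  apply Hs. intros V HV Hy'V. destruct (levels_comparable W HWl V HV) as [D|[D|D]].
  - exact D.
  - subst; contradiction.
  - exfalso. apply Hn. exact (level_transitive W HWl V D y' Hy'V).
Qed.

(* If each member of y lies in a level, some level includes y: the lower
   union of the levels missing some member of y. *)
Lemma level_bound y : (forall y', y' ∈ y -> exists V, is_level V /\ y' ∈ V) ->
  exists A, is_level A /\ subset y A.
Proof.
  intro IH.
  destruct (levels_missing_set y IH) as [S0 HS0].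
  assert (HS0dc : down_closed S0).
  { split.
    - intros W HW. apply HS0 in HW. tauto.
    - intros W HW W' HW' HW'W. apply HS0 in HW. destruct HW as [HWl [y' [Hy' Hn]]].
      apply HS0. split; [exact HW'|]. exists y'. split; [exact Hy'|].
      intro Hc. apply Hn. exact (level_transitive W HWl W' HW'W y' Hc). }
  destruct (lower_union_exists S0) as [A HA].
  exists A. split; [exact (lower_union_level S0 A HS0dc HA)|].
  intros y' Hy'. destruct (IH y' Hy') as [V0 [HV0 Hy'V0]].
  revert V0 HV0 Hy'V0.
  apply (eps_induction (fun V => is_level V -> y' ∈ V -> y' ∈ A)).
  { set_definable_by (FImp (fLevel 0) (FImp (FIn 1 0) (FIn 1 2))) (scons y' (fun _ : nat => A)). }
  intros V IHV HV Hy'V.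
  destruct (level_member_below V HV y' Hy'V) as [W [HWl [HWV Hy'W]]].
  destruct (classic (y' ∈ W)) as [C|C].
  - exact (IHV W HWV HWl C).
  - apply HA. exists W. split; [|exact Hy'W].
    apply HS0. split; [exact HWl | exists y'; split; assumption].
Qed.

Lemma every_set_in_level : forall y, exists V, is_level V /\ y ∈ V.
Proof.
  apply (eps_induction (fun y => exists V, is_level V /\ y ∈ V)).
  { closed_definable_by (FEx (FAnd (fLevel 0) (FIn 1 0))). }
  intros y IH.
  destruct (level_bound y IH) as [A [HA HyA]].
  destruct (power_level A HA) as [V [HV Hsub]].
  exists V. split; [exact HV | exact (Hsub y HyA)].
Qed.

Definition rank_le (x y : St) := forall V, is_level V -> y ∈ V -> x ∈ V.

Lemma rank_le_total x y : rank_le x y \/ rank_le y x.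
Proof.
  destruct (classic (rank_le y x)) as [C|C]; [right; exact C|]. left.
  intros V HV HyV. apply NNPP. intro Hx. apply C. intros W HW HxW.
  destruct (levels_comparable V HV W HW) as [D|[D|D]].
  - exact (level_transitive W HW V D y HyV).
  - subst W. contradiction.
  - exfalso. exact (Hx (level_transitive V HV W D x HxW)).
Qed.

(* No last element: a level containing x is strictly above x. *)
Lemma rank_unbounded x : exists y, ~ rank_le y x.
Proof.
  destruct (every_set_in_level x) as [V [HV HxV]].
  exists V. intro H. exact (not_in_self V (H V HV HxV)).
Qed.

Lemma rank_segment_bounded x : exists s, forall y, rank_le y x -> y ∈ s.
Proof.
  destruct (every_set_in_level x) as [W [HW HxW]].
  exists W. intros y H. exact (H W HW HxW).
Qed.

Lemma rank_relation : exists R, (forall p, p ∈c R -> exists x y, ispair x y p) /\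
  forall x y, rle M R x y <-> rank_le x y.
Proof.
  destruct (class_of (fun p => exists x y, ispair x y p /\ rank_le x y)) as [R HR].
  { closed_definable_by
      (FEx (FEx (FAnd (fPair 1 0 2) (FAll (FImp (fLevel 0) (FImp (FIn 1 0) (FIn 2 0))))))). }
  exists R. split.
  - intros p Hp. apply HR in Hp. destruct Hp as [x [y [Hp _]]]. exists x, y. exact Hp.
  - intros a b. split.
    + intros [p [Hp HpR]]. apply HR in HpR. destruct HpR as [x [y [Hp' Hle]]].
      destruct (pair_injective _ _ _ _ _ Hp Hp') as [<- <-]. exact Hle.
    + intro H. destruct (pair_exists a b) as [p Hp]. exists p. split; [exact Hp|].
      apply HR. exists a, b. tauto.
Qed.

Section Universe.
Variable V : Cl.
Hypothesis HV : forall x, x ∈c V.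

Lemma set_classes_ideal : is_ideal M V (set_classes M).
Proof.
  split; [|split; [|split; [|split]]].
  - destruct set_inhabited as [d].
    exists (FEx (FAll (fIff (FInC 0 0) (FIn 0 1)))), (fun _ : nat => d), (fun _ : nat => V).
    intro A. reflexivity.
  - intros Y _ z _. apply HV.
  - intros Y1 Y2 Y [a1 H1] [a2 H2] HY. destruct (union2 a1 a2) as [u Hu].
    exists u. intro z. rewrite HY, H1, H2, Hu. reflexivity.
  - intros Y Z [a Ha] HZ. destruct (separation_class Z a) as [b Hb].
    exists b. intro z. rewrite Hb. split; [|tauto].
    intro H. split; [apply Ha; apply HZ; exact H | exact H].
  - intros [a Ha]. apply (not_in_self a). apply Ha. apply HV.
Qed.

Lemma rank_preordering R : (forall p, p ∈c R -> exists x y, ispair x y p) ->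
  (forall x y, rle M R x y <-> rank_le x y) -> preordering M V R.
Proof.
  intros Hfield Hrle. split; [|split; [|split; [|split]]].
  - intros p Hp. destruct (Hfield p Hp) as [x [y Hxy]]. exists x, y. split; [exact Hxy | split; apply HV].
  - intros x _. apply Hrle. intros W _ H. exact H.
  - intros x y z _ _ _ H1 H2. apply Hrle. apply Hrle in H1. apply Hrle in H2.
    intros W HW Hz. exact (H1 W HW (H2 W HW Hz)).
  - intros x y _ _. rewrite !Hrle. apply rank_le_total.
  - intros x _. destruct (rank_unbounded x) as [y Hy]. exists y. split; [apply HV|].
    rewrite Hrle. exact Hy.
Qed.

Lemma rank_bounded_are_sets R : (forall x y, rle M R x y <-> rank_le x y) ->
  seg_sub M V R (set_classes M).
Proof.
  intros Hrle Y _ [x [_ Hx]].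
  destruct (rank_segment_bounded x) as [W HW]. destruct (separation_class Y W) as [b Hb].
  exists b. intro z. rewrite Hb. split; [|tauto]. intro Hz. split; [|exact Hz].
  apply HW. apply Hrle. exact (proj2 (Hx z Hz)).
Qed.

Definition segment_of (R : Cl) (x s : St) := forall y, y ∈ s <-> rle M R y x.

Lemma segments_are_sets J R : (forall A, J A -> set_classes M A) -> seg_sub M V R J ->
  forall x, exists s, segment_of R x s.
Proof.
  intros HJ HS x.
  destruct (class_of (fun y => rle M R y x)) as [C HC].
  { definable_by (FEx (FAnd (fPair 1 2 0) (FInC 0 0))) (fun _ : nat => x) (fun _ : nat => R). }
  destruct (HJ C) as [s Hs].
  { apply HS; [intros z _; apply HV|]. exists x. split; [apply HV|].
    intros y Hy. split; [apply HV | apply HC; exact Hy]. }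
  exists s. intro y. rewrite <- Hs. apply HC.
Qed.

(* A set outside a J-preordering's ideal J is cofinal, being unbounded. *)
Lemma cofinal_outside J R A a : preordering M V R -> seg_sub M V R J ->
  (forall z, z ∈c A <-> z ∈ a) -> ~ J A -> forall z, exists x, x ∈ a /\ rle M R z x.
Proof.
  intros [_ [_ [_ [Htot _]]]] HS Ha HnJ z. apply NNPP. intro Hn. apply HnJ. apply HS.
  - intros w _. apply HV.
  - exists z. split; [apply HV|]. intros y Hy. split; [apply HV|]. apply Ha in Hy.
    destruct (Htot y z (HV y) (HV z)) as [D|D]; [exact D|].
    exfalso. apply Hn. exists y. split; assumption.
Qed.

(* Minimality: the union of the segments below a cofinal set would be a set
   containing every set. *)
Lemma no_smaller_access_ideal J : (forall A, J A -> set_classes M A) ->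
  (exists A, set_classes M A /\ ~ J A) -> ~ accessible M V J.
Proof.
  intros HJ [A [[a Ha] HnJ]] [R [HR HS]].
  assert (HF : definable (fun p => exists x s, ispair x s p /\ segment_of R x s)).
  { destruct set_inhabited as [d].
    definable_by (FEx (FEx (FAnd (fPair 1 0 2)
                    (FAll (fIff (FIn 0 1) (FEx (FAnd (fPair 1 3 0) (FInC 0 0))))))))
      (fun _ : nat => d) (fun _ : nat => R). }
  assert (Hfun : forall x s s', segment_of R x s -> segment_of R x s' -> s = s').
  { intros x s s' H H'. apply (ax_ext_set M). intro y. rewrite (H y), (H' y). reflexivity. }
  destruct (union_of_image _ HF Hfun a) as [u Hu].
  apply (not_in_self u). apply Hu.
  destruct (cofinal_outside J R A a HR HS Ha HnJ u) as [x [Hxa Hux]].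
  destruct (segments_are_sets J R HJ HS x) as [s Hs].
  exists x, s. split; [exact Hxa|]. split; [exact Hs | apply Hs; exact Hux].
Qed.

End Universe.
End Development.

Theorem theorem2p3 : forall (M : GBC_model) (V : gcls M),
  (forall x : gset M, cmem x V) ->
  minimal_access_ideal M V (set_classes M).
Proof.
  intros M V HV. split; [split|].
  - exact (set_classes_ideal M V HV).
  - destruct (rank_relation M) as [R [Hfield Hrle]].
    exists R. split.
    + exact (rank_preordering M V HV R Hfield Hrle).
    + exact (rank_bounded_are_sets M V R Hrle).
  - intros J _ HJ Hsmaller. exact (no_smaller_access_ideal M V HV J HJ Hsmaller).
Qed.
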